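(* Let $n>k\ge1$ and $0\le r\le k$. The number of pairs $(A,B)\in M_k(\mathbb{F}_q)\times M_{k,n-k}(\mathbb{F}_q)$ with $\operatorname{rank}\mathcal{C}(A,B)=r$ (i.e. with $r$-dimensional reachability subspace) is $${k\brack r}_q\, q^{(k-r)^2}\prod_{i=k-r+1}^{k}(q^n-q^i).$$ In particular, the number of reachable pairs (those with $\operatorname{rank}\mathcal{C}(A,B)=k$) is $\prod_{i=1}^{k}(q^n-q^i)$.
   Context: $\mathbb{F}_q$ is the finite field with $q$ elements. For $(A,B)\in M_k(\mathbb{F}_q)\times M_{k,n-k}(\mathbb{F}_q)$, the reachability matrix is $\mathcal{C}(A,B)=[\,B\ \ AB\ \ \cdots\ \ A^{k-1}B\,]$. ${k\brack r}_q=\prod_{i=0}^{r-1}\frac{q^{k-i}-1}{q^{i+1}-1}$ denotes the $q$-binomial coefficient (the number of $r$-dimensional subspaces of $\mathbb{F}_q^k$). Empty products equal $1$. *)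

From HB Require Import structures.
From mathcomp Require Import all_boot all_order all_algebra.
Set Implicit Arguments. Unset Strict Implicit. Unset Printing Implicit Defensive.
Import GRing.Theory.
Local Open Scope ring_scope.

Definition reach_mx (F : fieldType) (k m : nat) (A : 'M[F]_k) (B : 'M[F]_(k, m)) :
  'M[F]_(k, \sum_(j < k) m) :=
  \mxrow_(j < k) (A ^+ j *m B).

Definition qbinom (q k r : nat) : rat :=
  \prod_(i < r) (((q ^ (k - i))%:R - 1) / ((q ^ i.+1)%:R - 1)).

From HB Require Import structures.
From mathcomp Require Import all_boot all_order all_algebra all_field.
From mathcomp Require Import ring zify.
Set Implicit Arguments. Unset Strict Implicit. Unset Printing Implicit Defensive.
Import Order.TTheory GRing.Theory Num.Theory.
Local Open Scope ring_scope.

(* Work with row vectors: reachmx A B below is the row space of the B A^i, the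
   transpose of the column space of reach_mx.  A pair (A, B) whose reachable
   space has rank r is determined by a row-free basis E of that space, by a
   reachable pair (A1, B1) of size r written in that basis, and by the part Z of
   A that vanishes on it: (A, B) = (E^+ A1 E + Z, B1 E) with E Z = 0.  Counting
   the triples ((A, B), E) in two ways gives
     N_r = [k r]_q q^(k(k-r)) R_r,
   where N_r counts pairs of rank r and R_r reachable pairs of size r.  Since
   the N_r add up to all q^(k(k+m)) pairs, induction on k identifies R_k, and
   a q-Pascal computation shows that R_k = prod_(j<k) (q^(k+m) - q^(j+1)) solves
   this recursion. *)

Section Krylov.
Variable F : fieldType.

Definition krylovmx k m N (A : 'M[F]_k) (B : 'M[F]_(m, k)) : 'M[F]_k :=
  (\sum_(i < N) <<B *m A ^+ i>>)%MS.

Definition reachmx k m (A : 'M[F]_k) (B : 'M[F]_(m, k)) := krylovmx k A B.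

Section FixedPair.
Variables (k m : nat) (A : 'M[F]_k) (B : 'M[F]_(m, k)).
Local Notation K N := (krylovmx N A B).

Lemma krylovmx_mono N M : (N <= M)%N -> (K N <= K M)%MS.
Proof.
move=> leNM; apply/sumsmx_subP => i _.
exact: (sumsmx_sup (widen_ord leNM i)).
Qed.

Lemma sub_krylovmx N i : (i < N)%N -> (B *m A ^+ i <= K N)%MS.
Proof. by move=> ltiN; rewrite -genmxE; exact: (sumsmx_sup (Ordinal ltiN)). Qed.

Lemma krylovmx_min N p (U : 'M_(p, k)) :
  (B <= U)%MS -> (U *m A <= U)%MS -> (K N <= U)%MS.
Proof.
move=> sBU sUAU; apply/sumsmx_subP => i _; rewrite genmxE.
elim: (nat_of_ord i) => [|j IHj]; first by rewrite expr0 mulmx1.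
by rewrite exprSr mulmxA (submx_trans _ sUAU) ?submxMr.
Qed.

Lemma krylovmxMr N : (K N *m A <= K N.+1)%MS.
Proof.
rewrite sumsmxMr_gen; apply/sumsmx_subP => i _.
rewrite genmxE (eqmxMr _ (genmxE _)) -mulmxA mulmxE -exprSr.
by apply: sub_krylovmx; rewrite ltnS.
Qed.

Lemma krylovmx_stationary i N : (K i.+1 <= K i)%MS -> (K N <= K i)%MS.
Proof.
move=> sKi1Ki; apply: krylovmx_min; last exact: submx_trans (krylovmxMr i) sKi1Ki.
apply: submx_trans sKi1Ki.
by have := @sub_krylovmx i.+1 0 (ltn0Sn i); rewrite expr0 mulmx1.
Qed.

(* Each strict inclusion K i < K i.+1 raises the rank, which cannot exceed k. *)
Lemma exists_krylovmx_stationary :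
  exists2 i, (i <= k)%N & (K i.+1 <= K i)%MS.
Proof.
have grow j : (j <= \rank (K j))%N \/ exists2 i, (i < j)%N & (K i.+1 <= K i)%MS.
  elim: j => [|j [leRj | [i ltij sKi]]]; first by left.
    have [sKj | nsKj] := boolP (K j.+1 <= K j)%MS; first by right; exists j.
    left; apply: leq_ltn_trans leRj _.
    by rewrite (ltn_leqif (mxrank_leqif_sup (krylovmx_mono (leqnSn j)))).
  by right; exists i; rewrite // ltnW.
have [leRk1 | [i ltik1 sKi]] := grow k.+1; last by exists i.
by have := leq_trans leRk1 (rank_leq_col _); rewrite ltnn.
Qed.

Lemma sub_reachmx_pow N : (B *m A ^+ N <= reachmx A B)%MS.
Proof.
have [i leik sKi] := exists_krylovmx_stationary.
apply: submx_trans (krylovmx_mono leik).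
by apply: submx_trans (krylovmx_stationary N.+1 sKi); exact: sub_krylovmx.
Qed.

Lemma sub_reachmx : (B <= reachmx A B)%MS.
Proof. by have := sub_reachmx_pow 0; rewrite expr0 mulmx1. Qed.

Lemma reachmxMr : (reachmx A B *m A <= reachmx A B)%MS.
Proof.
apply: submx_trans (krylovmxMr _) _; apply/sumsmx_subP => i _.
by rewrite genmxE sub_reachmx_pow.
Qed.

Lemma krylovmx_reachmx N : (k <= N)%N -> (krylovmx N A B == reachmx A B)%MS.
Proof.
move=> lekN; apply/andP; split; last exact: krylovmx_mono.
exact: krylovmx_min sub_reachmx reachmxMr.
Qed.

End FixedPair.

Lemma reachmx_restrict k r m (A : 'M[F]_k) (B : 'M_(m, k)) (E : 'M_(r, k))
    (A1 : 'M_r) (B1 : 'M_(m, r)) :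
  (r <= k)%N -> E *m A = A1 *m E -> B = B1 *m E ->
  (reachmx A B == reachmx A1 B1 *m E)%MS.
Proof.
move=> lerk EA BE.
have pow j : B *m A ^+ j = B1 *m A1 ^+ j *m E.
  elim: j => [|j IHj]; first by rewrite !expr0 !mulmx1.
  by rewrite !exprSr -!mulmxE !mulmxA IHj -!mulmxA EA.
rewrite -(eqmxMr E (eqmxP (krylovmx_reachmx A1 B1 lerk))).
apply/andP; split.
  by apply/sumsmx_subP => i _; rewrite genmxE pow submxMr ?sub_krylovmx.
rewrite sumsmxMr_gen; apply/sumsmx_subP => i _.
by rewrite genmxE (eqmxMr _ (genmxE _)) -pow sub_reachmx_pow.
Qed.

Lemma trmxX k (A : 'M[F]_k) j : (A ^+ j)^T = A^T ^+ j.
Proof.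
elim: j => [|j IHj]; first by rewrite !expr0 trmx1.
by rewrite exprS -mulmxE trmx_mul IHj exprSr mulmxE.
Qed.

Lemma mxrank_reach_mx k m (A : 'M[F]_k) (B : 'M[F]_(k, m)) :
  \rank (reach_mx A B) = \rank (reachmx A^T B^T).
Proof.
rewrite -mxrank_tr tr_mxrow eqmx_col; congr (\rank _).
by apply: eq_bigr => i _; rewrite trmx_mul trmxX.
Qed.

End Krylov.

Lemma row_free_col_mx (F : fieldType) m n (v : 'rV[F]_n) (A : 'M[F]_(m, n)) :
  row_free (col_mx v A) = row_free A && ~~ (v <= A)%MS.
Proof.
rewrite /row_free -addsmxE.
have [leAvA] := mxrank_leqif_sup (addsmxSr v A).
rewrite addsmx_sub submx_refl andbT => eq_vA.
have le_vA_1A : (\rank (v + A) <= 1 + \rank A)%N.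
  by rewrite (leq_trans (mxrank_adds_leqif v A)) ?leq_add2r ?rank_leq_row.
have leAm := rank_leq_row A.
rewrite -eq_vA; apply/idP/andP => [/eqP rk | [/eqP rA /eqP ne]]; first (split; apply/eqP); lia.
Qed.

Section Counting.
Variable F : finFieldType.
Local Notation q := #|F|.

Lemma card_submx p n k (M : 'M[F]_(k, n)) :
  #|[set X : 'M[F]_(p, n) | (X <= M)%MS]| = (q ^ (p * \rank M))%N.
Proof.
have ->: [set X : 'M[F]_(p, n) | (X <= M)%MS] =
    [set W *m row_base M | W in [set: 'M[F]_(p, \rank M)]].
  apply/setP => X; rewrite inE; apply/idP/imsetP => [sXM | [W _ ->]].
    have /submxP[W ->] : (X <= row_base M)%MS by rewrite eq_row_base.
    by exists W; rewrite ?inE.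
  by rewrite -(eq_row_base M) submxMl.
by rewrite card_imset ?cardsT ?card_mx //; exact/row_free_inj/row_base_free.
Qed.

Lemma card_row_free m n : (m <= n)%N ->
  #|[set A : 'M[F]_(m, n) | row_free A]| = (\prod_(i < m) (q ^ n - q ^ i))%N.
Proof.
elim: m => [_ | m IHm ltmn].
  rewrite big_ord0; apply: (@eq_card1 _ 0) => A.
  by rewrite !inE flatmx0 eqxx /row_free mxrank0.
rewrite big_ord_recr -IHm; last exact: ltnW.
pose S := [set Av : 'M[F]_(m, n) * 'rV[F]_n | row_free Av.1 && ~~ (Av.2 <= Av.1)%MS].
have -> : [set M : 'M[F]_(1 + m, n) | row_free M] = [set col_mx Av.2 Av.1 | Av in S].
  apply/setP => M; rewrite inE; apply/idP/imsetP => [fM | [[A v] SAv ->]].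
    by exists (dsubmx M, usubmx M); rewrite ?inE -?row_free_col_mx vsubmxK.
  by rewrite row_free_col_mx; rewrite inE in SAv.
rewrite card_imset; last first.
  by move=> [A v] [B w] /= eq_vA_wB; have [-> ->] := @eq_col_mx _ 1 m n _ _ _ _ eq_vA_wB.
have card_out (A : 'M[F]_(m, n)) : row_free A ->
    #|[set v : 'rV[F]_n | ~~ (v <= A)%MS]| = (q ^ n - q ^ m)%N.
  move=> fA; rewrite (eq_card (B := ~: [set v : 'rV[F]_n | (v <= A)%MS])).
    have := cardsC [set v : 'rV[F]_n | (v <= A)%MS].
    by rewrite card_submx (eqP fA) card_mx !mul1n => <-; rewrite addKn.
  by move=> v; rewrite !inE.
rewrite -sum1dep_card.
rewrite -(pair_big_dep (fun A => row_free A) (fun A v => ~~ (v <= A)%MS) (fun _ _ => 1%N)).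
rewrite /= -sum_nat_const.
by apply: eq_big => [A | A fA]; rewrite ?inE // sum1dep_card card_out.
Qed.

Lemma card_mulmx_eq0 r k p (E : 'M[F]_(r, k)) :
  #|[set Z : 'M[F]_(k, p) | E *m Z == 0]| = (q ^ (p * (k - \rank E)))%N.
Proof.
have ->: [set Z : 'M[F]_(k, p) | E *m Z == 0] =
    [set Y^T | Y in [set Y : 'M[F]_(p, k) | (Y <= kermx E^T)%MS]].
  apply/setP => Z; rewrite inE; apply/idP/imsetP => [/eqP EZ0 | [Y]].
    by exists Z^T; rewrite ?trmxK // inE sub_kermx -trmx_mul EZ0 trmx0.
  by rewrite inE sub_kermx => /eqP YE0 ->; rewrite -[E]trmxK -trmx_mul YE0 trmx0.
by rewrite card_imset ?card_submx ?mxrank_ker ?mxrank_tr //; exact: trmx_inj.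
Qed.

Definition reach_pairs k m r :=
  [set AB : 'M[F]_k * 'M[F]_(m, k) | \rank (reachmx AB.1 AB.2) == r].

Section Fiber.
Variables (k r m : nat) (E : 'M[F]_(r, k)).
Hypotheses (fE : row_free E) (lerk : (r <= k)%N).

Definition lift_pair (P : ('M[F]_r * 'M[F]_(m, r)) * 'M[F]_k) :=
  (pinvmx E *m P.1.1 *m E + P.2, P.1.2 *m E).

Lemma mul_lift_pair A1 Z : E *m Z = 0 -> E *m (pinvmx E *m A1 *m E + Z) = A1 *m E.
Proof.
move=> EZ0; rewrite mulmxDr EZ0 addr0 mulmxA (mulmxA E (pinvmx E)).
by rewrite mulmxVp // mul1mx.
Qed.

Lemma reachmx_eq_lift_pair :
  [set AB : 'M[F]_k * 'M[F]_(m, k) | (reachmx AB.1 AB.2 == E)%MS]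
  = lift_pair @: setX (reach_pairs r m r) [set Z : 'M[F]_k | E *m Z == 0].
Proof.
apply/setP => [[A B]]; rewrite inE /=; apply/idP/imsetP => [/eqmxP defE | ].
  have sEAE : (E *m A <= E)%MS by rewrite -(eqmxMr A defE) -defE; exact: reachmxMr.
  have sBE : (B <= E)%MS by rewrite -defE sub_reachmx.
  set A1 := E *m A *m pinvmx E; set B1 := B *m pinvmx E.
  have EA : E *m A = A1 *m E by rewrite mulmxKpV.
  have BE : B = B1 *m E by rewrite mulmxKpV.
  exists ((A1, B1), A - pinvmx E *m A1 *m E).
    rewrite !inE /= mulmxBr mulmxA (mulmxA E (pinvmx E)) mulmxVp // mul1mx.
    rewrite -EA subrr eqxx andbT.
    by rewrite -(mxrankMfree _ fE) -(eqmxP (reachmx_restrict lerk EA BE)) defE.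
  by rewrite /lift_pair /= addrC subrK -BE.
case=> [[[A1 B1] Z]]; rewrite !inE /= => /andP[rk1 /eqP EZ0] [-> ->].
apply/eqmxP/(eqmx_trans (eqmxP (reachmx_restrict lerk (mul_lift_pair A1 EZ0) (erefl _)))).
by apply: eqmxMfull; rewrite /row_full (eqP rk1).
Qed.

Lemma card_reachmx_eq :
  #|[set AB : 'M[F]_k * 'M[F]_(m, k) | (reachmx AB.1 AB.2 == E)%MS]|
  = (#|reach_pairs r m r| * q ^ (k * (k - r)))%N.
Proof.
rewrite reachmx_eq_lift_pair card_in_imset ?cardsX ?card_mulmx_eq0 ?(eqP fE) //.
move=> [[A1 B1] Z1] [[A2 B2] Z2]; rewrite !inE /= => /andP[_ /eqP EZ1] /andP[_ /eqP EZ2].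
case=> eqA eqB; have eqB12 := row_free_inj fE eqB.
have /row_free_inj eqA12 : A1 *m E = A2 *m E.
  by rewrite -(mul_lift_pair A1 EZ1) eqA mul_lift_pair.
by move: eqA; rewrite eqA12 // eqB12 => /addrI ->.
Qed.

End Fiber.

Lemma card_bases_eqmx k r p (U : 'M[F]_(p, k)) : \rank U = r ->
  #|[set E : 'M[F]_(r, k) | row_free E && (U == E)%MS]|
  = #|[set P : 'M[F]_r | row_free P]|.
Proof.
case: r / => /=; set U0 := row_base U.
have fU0 : row_free U0 := row_base_free U.
have ->: [set E : 'M[F]_(\rank U, k) | row_free E && (U == E)%MS]
    = [set P *m U0 | P in [set P : 'M[F]_(\rank U) | row_free P]].
  apply/setP => E; rewrite inE; apply/idP/imsetP => [/andP[fE /eqmxP defE] | [P]].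
    have sEU0 : (E <= U0)%MS by rewrite eq_row_base -defE.
    exists (E *m pinvmx U0); last by rewrite mulmxKpV.
    by rewrite inE /row_free -(mxrankMfree _ fU0) mulmxKpV.
  rewrite inE => fP ->; have fPU0 : row_free (P *m U0) by rewrite /row_free mxrankMfree.
  rewrite fPU0; apply/eqmxP/eqmx_sym/(eqmx_trans _ (eq_row_base U))/eqmxMfull.
  by rewrite row_full_unit -row_free_unit.
by rewrite card_imset //; exact: row_free_inj.
Qed.

Lemma sum_card_exchange (T1 T2 : finType) (c : T1 -> T2 -> bool) :
  (\sum_x #|[set y | c x y]| = \sum_y #|[set x | c x y]|)%N.
Proof.
under eq_bigr do rewrite -sum1dep_card big_mkcond.
under [RHS]eq_bigr do rewrite -sum1dep_card big_mkcond.
exact: exchange_big.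
Qed.

Lemma card_reach_pairs_mul k m r : (r <= k)%N ->
  (#|reach_pairs k m r| * #|[set P : 'M[F]_r | row_free P]|)%N
  = (#|[set E : 'M[F]_(r, k) | row_free E]|
     * (#|reach_pairs r m r| * q ^ (k * (k - r))))%N.
Proof.
move=> lerk; rewrite -sum_nat_const -[in RHS]sum_nat_const big_mkcond /=.
pose c (AB : 'M[F]_k * 'M[F]_(m, k)) (E : 'M[F]_(r, k)) :=
  row_free E && (reachmx AB.1 AB.2 == E)%MS.
transitivity (\sum_AB #|[set E | c AB E]|)%N.
  apply: eq_bigr => [[A B]] _; rewrite !inE /=; case: eqP => [rkAB | rkABn].
    by rewrite card_bases_eqmx.
  apply/esym/eqP; rewrite cards_eq0; apply/eqP/setP => E; rewrite !inE.
  by apply/negP => /andP[/eqP fE /eqmxP defE]; apply: rkABn; rewrite defE.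
rewrite sum_card_exchange [RHS]big_mkcond; apply: eq_bigr => E _; rewrite inE.
have [fE | nfE] := boolP (row_free E); last first.
  by apply/eqP; rewrite cards_eq0; apply/eqP/setP => AB; rewrite !inE /c (negPf nfE).
rewrite -(card_reachmx_eq m fE lerk); apply: eq_card => AB.
by rewrite !inE /c fE.
Qed.
End Counting.

Section QBinomial.
Variable q : nat.
Hypothesis q_gt1 : (1 < q)%N.
Local Notation Q := (q%:R : rat).

Lemma expQ1_neq0 n : (0 < n)%N -> Q ^+ n - 1 != 0.
Proof. by move=> n_gt0; rewrite subr_eq0 gt_eqF // exprn_egt1 ?ltr1n // -lt0n. Qed.

Definition qbinom_num k t : rat := \prod_(i < t) (Q ^+ (k - i) - 1).
Definition qbinom_den t : rat := \prod_(i < t) (Q ^+ i.+1 - 1).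

Lemma qbinomE k t : qbinom q k t = qbinom_num k t / qbinom_den t.
Proof. by rewrite /qbinom -prodf_div; apply: eq_bigr => i _; rewrite !natrX. Qed.

Lemma qbinom_den_neq0 t : qbinom_den t != 0.
Proof. by apply/prodf_neq0 => i _; apply: expQ1_neq0. Qed.

Lemma qbinom_recr k t :
  qbinom q k t.+1 = qbinom q k t * (Q ^+ (k - t) - 1) / (Q ^+ t.+1 - 1).
Proof. by rewrite /qbinom big_ord_recr /= !natrX mulrA. Qed.

Lemma qbinom0 k : qbinom q k 0 = 1.
Proof. by rewrite /qbinom big_ord0. Qed.

Lemma qbinom_small k t : (k < t)%N -> qbinom q k t = 0.
Proof.
move=> ltkt; rewrite qbinomE /qbinom_num (bigD1 (Ordinal ltkt)) //=.
by rewrite subnn expr0 subrr !mul0r.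
Qed.

Lemma qbinomS k t : (t <= k)%N ->
  qbinom q k.+1 t.+1 = Q ^+ (k - t) * qbinom q k t + qbinom q k t.+1.
Proof.
move=> letk.
have numSS : qbinom_num k.+1 t.+1 = (Q ^+ k.+1 - 1) * qbinom_num k t.
  by rewrite /qbinom_num big_ord_recl subn0.
have numS : qbinom_num k t.+1 = qbinom_num k t * (Q ^+ (k - t) - 1).
  by rewrite /qbinom_num big_ord_recr.
have denS : qbinom_den t.+1 = qbinom_den t * (Q ^+ t.+1 - 1).
  by rewrite /qbinom_den big_ord_recr.
rewrite !qbinomE numSS numS denS.
have -> : Q ^+ k.+1 = Q ^+ (k - t) * Q ^+ t.+1.
  by rewrite -exprD; congr (_ ^+ _); lia.
have := qbinom_den_neq0 t; have := expQ1_neq0 (ltn0Sn t).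
set x := Q ^+ (k - t); set y := Q ^+ t.+1 => y1 den.
by field; rewrite y1 den.
Qed.

Definition qfree r k : rat := \prod_(i < r) (Q ^+ k - Q ^+ i).

Lemma qfreeS r k : qfree r.+1 k = qfree r k * (Q ^+ k - Q ^+ r).
Proof. by rewrite /qfree big_ord_recr. Qed.

Lemma qfree_diagS r : qfree r.+1 r.+1 = (Q ^+ r.+1 - 1) * Q ^+ r * qfree r r.
Proof.
rewrite /qfree big_ord_recl expr0 -mulrA; congr (_ * _).
under eq_bigr do rewrite lift0 !exprS -mulrBr.
by rewrite prodrMl card_ord.
Qed.

Lemma qfree_diag_neq0 r : qfree r r != 0.
Proof.
apply/prodf_neq0 => i _; rewrite subr_eq0 gt_eqF //.
by rewrite ltr_eXn2l ?ltr1n.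
Qed.

Lemma qbinom_qfree k r : (r <= k)%N -> qbinom q k r * qfree r r = qfree r k.
Proof.
elim: r => [|r IHr] ltrk; first by rewrite qbinom0 /qfree !big_ord0 mulr1.
rewrite qfree_diagS qfreeS -IHr; last exact: ltnW.
rewrite qbinom_recr.
have -> : Q ^+ k = Q ^+ (k - r) * Q ^+ r by rewrite -exprD (subnK (ltnW ltrk)).
have := expQ1_neq0 (ltn0Sn r); set x := Q ^+ (k - r); set y := Q ^+ r.+1 => y1.
by field.
Qed.

Lemma qbinomnn k : qbinom q k k = 1.
Proof. by apply: (mulIf (qfree_diag_neq0 k)); rewrite qbinom_qfree // mul1r. Qed.

Definition qreach m s : rat := \prod_(j < s) (Q ^+ (s + m) - Q ^+ j.+1).

Lemma qreachS m s : qreach m s.+1 = Q ^+ s.+1 * (Q ^+ (s + m) - 1) * qreach m s.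
Proof.
rewrite /qreach; under eq_bigr do rewrite addSn !exprS -mulrBr.
by rewrite prodrMl card_ord -mulrA big_ord_recl expr0.
Qed.

Lemma qreach_pascal_step m k i : (i <= k)%N ->
  Q ^+ (k - i) * (Q ^+ (k.+1 * (k - i)) * qreach m i.+1)
    + Q ^+ (k.+1 * (k.+1 - i)) * qreach m i
  = Q ^+ (k.*2.+1 + m) * (Q ^+ (k * (k - i)) * qreach m i).
Proof.
move=> leik; rewrite qreachS.
have e1 : Q ^+ (k - i) * Q ^+ (k.+1 * (k - i)) * Q ^+ i.+1 = Q ^+ (k.+1 * (k.+1 - i)).
  by rewrite -!exprD; congr (_ ^+ _); nia.
have e2 : Q ^+ (k.+1 * (k.+1 - i)) * Q ^+ (i + m)
          = Q ^+ (k.*2.+1 + m) * Q ^+ (k * (k - i)).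
  by rewrite -!exprD; congr (_ ^+ _); rewrite -addnn; nia.
rewrite [RHS]mulrA -e2 -e1; ring.
Qed.

Lemma sum_qbinom_qreach m k :
  \sum_(r < k.+1) qbinom q k r * Q ^+ (k * (k - r)) * qreach m r = Q ^+ (k * (k + m)).
Proof.
elim: k => [|k IHk].
  by rewrite big_ord_recl big_ord0 qbinom0 /qreach big_ord0 !mul1r addr0 expr0.
pose X t := Q ^+ (k.+1 * (k.+1 - t)) * qreach m t.
under eq_bigr do rewrite -mulrA -/(X _).
rewrite big_ord_recl qbinom0 mul1r.
under eq_bigr => s _ do rewrite lift0 (qbinomS (ltn_ord s : (s <= k)%N)) mulrDl.
rewrite big_split /= addrCA.
have -> : X 0%N + \sum_(s < k.+1) qbinom q k s.+1 * X s.+1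
        = \sum_(s < k.+1) qbinom q k s * X s.
  rewrite -[X 0%N]mul1r -(qbinom0 k) -(big_ord_recl k.+1 (fun s => qbinom q k s * X s)).
  by rewrite big_ord_recr /= qbinom_small // mul0r addr0.
have step i : (i <= k)%N ->
    Q ^+ (k - i) * qbinom q k i * X i.+1 + qbinom q k i * X i
    = Q ^+ (k.*2.+1 + m) * (qbinom q k i * Q ^+ (k * (k - i)) * qreach m i).
  move=> leik; rewrite /X subSS; have := qreach_pascal_step m leik.
  set a := Q ^+ (k - i); set b := Q ^+ (k.+1 * (k - i)); move=> pascal.
  transitivity (qbinom q k i * (a * (b * qreach m i.+1)
    + Q ^+ (k.+1 * (k.+1 - i)) * qreach m i)); first by ring.
  by rewrite pascal; ring.
rewrite -big_split /=.
under eq_bigr => i _ do rewrite (step i (ltn_ord i : (i <= k)%N)).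
by rewrite -mulr_sumr IHk -exprD; congr (_ ^+ _); rewrite -addnn; nia.
Qed.

End QBinomial.

Lemma sum_card_fibres (T : finType) k (f : T -> nat) : (forall x, f x <= k)%N ->
  (\sum_(r < k.+1) #|[set x | f x == r]| = #|T|)%N.
Proof.
move=> lefk; rewrite -sum1_card (partition_big (fun x => inord (f x) : 'I_k.+1) predT) //=.
apply: eq_bigr => r _; rewrite -sum1dep_card; apply: eq_bigl => x.
by rewrite -val_eqE /= inordK ?ltnS.
Qed.

Section Enumeration.
Variable F : finFieldType.
Local Notation q := #|F|.
Local Notation Q := (q%:R : rat).

Let q_gt1 : (1 < q)%N := card_finNzRing_gt1 F.

Lemma card_row_free_rat r k : (r <= k)%N ->
  (#|[set E : 'M[F]_(r, k) | row_free E]|)%:R = qfree q r k.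
Proof.
move=> lerk; rewrite card_row_free // natr_prod; apply: eq_bigr => i _.
by rewrite natrB ?natrX // leq_exp2l // ltnW // (leq_trans (ltn_ord i)).
Qed.

Lemma card_reach_pairs_rat k m r : (r <= k)%N ->
  (#|reach_pairs F k m r|)%:R
  = qbinom q k r * Q ^+ (k * (k - r)) * (#|reach_pairs F r m r|)%:R.
Proof.
move=> lerk; have := congr1 (fun x : nat => x%:R : rat) (card_reach_pairs_mul F m lerk).
rewrite !natrM !card_row_free_rat // natrX -(qbinom_qfree q_gt1 lerk) => eq_cards.
by apply: (mulIf (qfree_diag_neq0 q_gt1 r)); rewrite eq_cards; ring.
Qed.

Lemma card_reachable_rat k m : (#|reach_pairs F k m k|)%:R = qreach q m k.
Proof.
elim/ltn_ind: k => k IHk.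
have total : (\sum_(r < k.+1) #|reach_pairs F k m r| = q ^ (k * k) * q ^ (m * k))%N.
  by rewrite sum_card_fibres ?card_prod ?card_mx // => AB; exact: rank_leq_col.
have lower : \sum_(r < k) (#|reach_pairs F k m r|)%:R
    = \sum_(r < k) qbinom q k r * Q ^+ (k * (k - r)) * qreach q m r.
  by apply: eq_bigr => r _; rewrite card_reach_pairs_rat ?IHk // ltnW.
have := congr1 (fun x : nat => x%:R : rat) total.
rewrite natr_sum natrM !natrX -exprD (_ : (k * k + m * k = k * (k + m))%N); last by nia.
rewrite -(sum_qbinom_qreach q_gt1) !big_ord_recr /= lower => /addrI.
by rewrite (qbinomnn q_gt1) subnn muln0 expr0 !mul1r.
Qed.

Lemma card_reach_mx_rank k m r :
  #|[set AB : 'M[F]_k * 'M[F]_(k, m) | \rank (reach_mx AB.1 AB.2) == r]|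
  = #|reach_pairs F k m r|.
Proof.
pose tr (AB : 'M[F]_k * 'M[F]_(m, k)) : 'M[F]_k * 'M[F]_(k, m) := (AB.1^T, AB.2^T).
have tr_inj : injective tr by move=> [A B] [A' B'] [/trmx_inj -> /trmx_inj ->].
rewrite -(card_imset _ tr_inj).
apply: eq_card => [[A B]]; rewrite inE; apply/idP/imsetP => [rkAB | [[A' B'] + [-> ->]]].
  by exists (A^T, B^T); rewrite /tr ?inE /= -?mxrank_reach_mx ?trmxK.
by rewrite inE /= mxrank_reach_mx !trmxK.
Qed.

Lemma qreach_closed_form k n r : (r <= k)%N -> (k < n)%N ->
  Q ^+ (k * (k - r)) * qreach q (n - k) r
  = (q ^ ((k - r) ^ 2))%:R * \prod_(k - r + 1 <= i < k.+1) ((q ^ n)%:R - (q ^ i)%:R).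
Proof.
move=> lerk ltkn; rewrite -[(k - r + 1)%N]add0n big_addn big_mkord.
rewrite (_ : (k.+1 - (k - r + 1) = r)%N); last by lia.
rewrite /qreach [in RHS](eq_bigr (fun i : 'I_r =>
  Q ^+ (k - r) * (Q ^+ (r + (n - k)) - Q ^+ i.+1))); last first.
  by move=> i _; rewrite !natrX mulrBr -!exprD; congr (_ ^+ _ - _ ^+ _); lia.
rewrite prodrMl card_ord natrX -exprM mulrA -exprD.
by congr (_ ^+ _ * _); nia.
Qed.

End Enumeration.

Theorem theorem4 (F : finFieldType) (n k r : nat) :
  (1 <= k)%N -> (k < n)%N -> (r <= k)%N ->
  (#|[set AB : 'M[F]_k * 'M[F]_(k, n - k) |
        \rank (reach_mx AB.1 AB.2) == r]|)%:R
  = qbinom #|F| k r * (#|F| ^ ((k - r) ^ 2))%:R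
    * \prod_(k - r + 1 <= i < k.+1) ((#|F| ^ n)%:R - (#|F| ^ i)%:R) :> rat
  /\
  (#|[set AB : 'M[F]_k * 'M[F]_(k, n - k) |
        \rank (reach_mx AB.1 AB.2) == k]|)%:R
  = \prod_(1 <= i < k.+1) ((#|F| ^ n)%:R - (#|F| ^ i)%:R) :> rat.
Proof.
move=> _ ltkn lerk; rewrite !card_reach_mx_rank.
rewrite (@card_reach_pairs_rat F _ _ _ lerk) (@card_reach_pairs_rat F _ _ _ (leqnn k)).
rewrite !card_reachable_rat -!mulrA (@qreach_closed_form F _ _ _ lerk ltkn).
rewrite (@qreach_closed_form F _ _ _ (leqnn k) ltkn) qbinomnn; last exact: card_finNzRing_gt1.
by split; last by rewrite subnn add0n exp0n // expn0 !mul1r.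
Qed.
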